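(* In the session calculus, strong weak fairness of instructions (SWI) coincides with strong fairness of components (SC): a path is SWI-fair iff it is SC-fair.
   Context: Session calculus: threads $P ::= \mathbf{end} \mid \bigoplus_{i\in I} p_i!\lambda_i;P_i \mid \sum_{i\in I} p_i?\lambda_i;P_i \mid X \mid \mu X.P$ (guarded recursion), thread states additionally $\langle q!\lambda\rangle;P$; networks $p[\![P]\!]\mid 0\mid N\parallel N$ with distinct locations and closed threads, modulo associativity/commutativity/unit. Transitions: (choice) $p[\![\bigoplus_{i\in I}p_i!\lambda_i;P_i]\!]\parallel N \xrightarrow{\tau} p[\![\langle p_k!\lambda_k\rangle;P_k]\!]\parallel N$; (unfold) $p[\![\mu X.P]\!]\parallel N\xrightarrow{\tau} p[\![P\{\mu X.P/X\}]\!]\parallel N$; (comm) $p_k[\![\langle q!\lambda_k\rangle;Q]\!]\parallel q[\![\sum_{i\in I}p_i?\lambda_i;P_i]\!]\parallel N \xrightarrow{(p_k,\lambda_k,q)} p_k[\![Q]\!]\parallel q[\![P_k]\!]\parallel N$. $\mathrm{comp}(t)$ is the moving location for a $\tau$-transition and $\{p,q\}$ for label $(p,\lambda,q)$. A path is a network state with a maximal sequence of transitions. Instructions: the occurrences of subexpressions $p_k!\lambda_k$, $p_k?\lambda_k$ or $\mu X$ in the network expression; each $\tau$-transition stems from one instruction and each communication transition from two; $\mathrm{instr}(t)$ is this set. Instruction $I$ is enabled in $N$ if some transition $t$ from $N$ has $I\in\mathrm{instr}(t)$; it is requested in $N$ if it is ready to be executed by its own thread in $N$ (even if not enabled for lack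 of a synchronisation partner); a path engages in $I$ if it contains $t$ with $I\in\mathrm{instr}(t)$. A path $\pi$ is SWI-fair if for every suffix $\pi'$, every instruction that is requested in every state of $\pi'$ and enabled in some state of every suffix of $\pi'$ is engaged in by $\pi'$. A path $\pi$ is SC-fair if for every suffix $\pi'$, every location $p$ such that every suffix of $\pi'$ contains a state with a transition $t$ satisfying $p\in\mathrm{comp}(t)$ has a transition involving $p$ in $\pi'$. *)

From Stdlib Require Import List Arith Bool.
Open Scope bool_scope.
Import ListNotations.

Definition loc := nat.
Definition lab := nat.
Definition var := nat.

Inductive proc : Type :=
| PEnd
| POut (bs : list (loc * lab * proc))   (* (+)_{i in I} p_i!l_i;P_i *)
| PIn  (bs : list (loc * lab * proc))   (* Sum_{i in I} p_i?l_i;P_i *)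
| PVar (X : var)
| PMu  (X : var) (P : proc).

(* thread states: a process, or <q!l>;P *)
Inductive tstate : Type :=
| TProc (P : proc)
| TPend (q : loc) (l : lab) (P : proc).

(* networks modulo assoc./comm./unit with distinct locations:
   a partial map from locations to thread states *)
Definition network := loc -> option tstate.

Fixpoint occurs_free (X : var) (P : proc) : bool :=
  match P with
  | PEnd => false
  | POut bs | PIn bs =>
      (fix go (bs : list (loc * lab * proc)) : bool :=
         match bs with [] => false | (_, _, Q) :: bs' => occurs_free X Q || go bs' end) bs
  | PVar Y => Nat.eqb X Y
  | PMu Y Q => negb (Nat.eqb X Y) && occurs_free X Q
  end.

Fixpoint unguarded (X : var) (P : proc) : bool :=
  match P with
  | PVar Y => Nat.eqb X Y
  | PMu Y Q => negb (Nat.eqb X Y) && unguarded X Q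
  | _ => false
  end.

Fixpoint guarded (P : proc) : bool :=
  match P with
  | PEnd | PVar _ => true
  | POut bs | PIn bs =>
      (fix go (bs : list (loc * lab * proc)) : bool :=
         match bs with [] => true | (_, _, Q) :: bs' => guarded Q && go bs' end) bs
  | PMu X Q => negb (unguarded X Q) && guarded Q
  end.

Definition closed (P : proc) : Prop := forall X, occurs_free X P = false.

Definition wf_tstate (T : tstate) : Prop :=
  match T with
  | TProc P | TPend _ _ P => closed P /\ guarded P = true
  end.

Definition wf_network (N : network) : Prop :=
  (exists L : list loc, forall p, N p <> None -> In p L) /\
  (forall p T, N p = Some T -> wf_tstate T).

(** * Instructions: occurrences of p!l, p?l, mu X in the network expression.
    An occurrence is identified by its location and its address in the
    syntax tree of the thread at that location. *)
Inductive dir : Type := Dbranch (k : nat) | Dcont (k : nat) | Dbody.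
Definition instr : Type := (loc * list dir)%type.

Inductive aproc : Type :=
| AEnd
| AOut (bs : list (instr * loc * lab * aproc))
| AIn  (bs : list (instr * loc * lab * aproc))
| AVar (X : var)
| AMu  (i : instr) (X : var) (P : aproc).

Inductive atstate : Type :=
| AProc (P : aproc)
| APend (i : instr) (q : loc) (l : lab) (P : aproc).

Definition anet := loc -> option atstate.

Fixpoint ann (p : loc) (a : list dir) (P : proc) : aproc :=
  match P with
  | PEnd => AEnd
  | POut bs => AOut
      ((fix go (k : nat) (bs : list (loc * lab * proc)) :=
          match bs with
          | [] => []
          | (q, l, Q) :: bs' => ((p, Dbranch k :: a), q, l, ann p (Dcont k :: a) Q) :: go (S k) bs'
          end) 0 bs)
  | PIn bs => AIn
      ((fix go (k : nat) (bs : list (loc * lab * proc)) :=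
          match bs with
          | [] => []
          | (q, l, Q) :: bs' => ((p, Dbranch k :: a), q, l, ann p (Dcont k :: a) Q) :: go (S k) bs'
          end) 0 bs)
  | PVar X => AVar X
  | PMu X Q => AMu (p, a) X (ann p (Dbody :: a) Q)
  end.

Definition annotate_ts (p : loc) (T : tstate) : atstate :=
  match T with
  | TProc P => AProc (ann p [] P)
  | TPend q l P => APend (p, [Dbranch 0]) q l (ann p [Dcont 0] P)
  end.

Definition annotate (N : network) : anet :=
  fun p => option_map (annotate_ts p) (N p).

(* substitution P{Q/X} (Q closed); copies keep their instruction identities *)
Fixpoint asubst (X : var) (Q : aproc) (P : aproc) : aproc :=
  match P with
  | AEnd => AEnd
  | AOut bs => AOut
      ((fix go (bs : list (instr * loc * lab * aproc)) :=
          match bs with [] => [] | (i, q, l, R) :: bs' => (i, q, l, asubst X Q R) :: go bs' end) bs)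
  | AIn bs => AIn
      ((fix go (bs : list (instr * loc * lab * aproc)) :=
          match bs with [] => [] | (i, q, l, R) :: bs' => (i, q, l, asubst X Q R) :: go bs' end) bs)
  | AVar Y => if Nat.eqb X Y then Q else AVar Y
  | AMu i Y R => if Nat.eqb X Y then AMu i Y R else AMu i Y (asubst X Q R)
  end.

Inductive label : Type :=
| LTau (p : loc)
| LComm (p : loc) (l : lab) (q : loc).

(* a transition: its label and instr(t), the instructions it stems from *)
Record trans : Type := mkTrans { tlab : label; tinstr : list instr }.

Definition comp (t : trans) : list loc :=
  match tlab t with LTau p => [p] | LComm p _ q => [p; q] end.

Definition upd (N : anet) (p : loc) (T : atstate) : anet :=
  fun r => if Nat.eqb r p then Some T else N r.

Inductive step : anet -> trans -> anet -> Prop :=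
| st_choice N p bs k i q l P :
    N p = Some (AProc (AOut bs)) ->
    nth_error bs k = Some (i, q, l, P) ->
    step N (mkTrans (LTau p) [i]) (upd N p (APend i q l P))
| st_unfold N p i X P :
    N p = Some (AProc (AMu i X P)) ->
    step N (mkTrans (LTau p) [i]) (upd N p (AProc (asubst X (AMu i X P) P)))
| st_comm N p i q l Q cs k j P :
    N p = Some (APend i q l Q) ->
    N q = Some (AProc (AIn cs)) ->
    nth_error cs k = Some (j, p, l, P) ->
    step N (mkTrans (LComm p l q) [i; j]) (upd (upd N p (AProc Q)) q (AProc P)).

(* instructions ready to be executed by their own thread *)
Definition front (T : atstate) : list instr :=
  match T with
  | AProc (AOut bs) | AProc (AIn bs) => map (fun b => fst (fst (fst b))) bs
  | AProc (AMu i _ _) => [i]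
  | APend i _ _ _ => [i]
  | _ => []
  end.

Definition requested (N : anet) (I : instr) : Prop :=
  exists p T, N p = Some T /\ In I (front T).

Definition enabled (N : anet) (I : instr) : Prop :=
  exists t N', step N t N' /\ In I (tinstr t).

(** * Paths: states pst 0, pst 1, ..., transitions ptr n from pst n to pst (n+1);
    plen = Some m: finite path with m transitions; None: infinite. *)
Record path : Type := mkPath { pst : nat -> anet; ptr : nat -> trans; plen : option nat }.

Definition st_idx (pi : path) (n : nat) : Prop :=
  match plen pi with None => True | Some m => n <= m end.
Definition tr_idx (pi : path) (n : nat) : Prop :=
  match plen pi with None => True | Some m => n < m end.

Definition is_path (pi : path) : Prop :=
  (forall n, tr_idx pi n -> step (pst pi n) (ptr pi n) (pst pi (S n))) /\
  (forall m, plen pi = Some m -> forall t N', ~ step (pst pi m) t N').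

(* suffixes of pi are those starting at state index k with st_idx pi k *)
Definition SWI_fair (pi : path) : Prop :=
  forall k, st_idx pi k ->
  forall I : instr,
    (forall n, k <= n -> st_idx pi n -> requested (pst pi n) I) ->
    (forall k', k <= k' -> st_idx pi k' ->
       exists n, k' <= n /\ st_idx pi n /\ enabled (pst pi n) I) ->
    exists n, k <= n /\ tr_idx pi n /\ In I (tinstr (ptr pi n)).

Definition SC_fair (pi : path) : Prop :=
  forall k, st_idx pi k ->
  forall p : loc,
    (forall k', k <= k' -> st_idx pi k' ->
       exists n t N', k' <= n /\ st_idx pi n /\ step (pst pi n) t N' /\ In p (comp t)) ->
    exists n, k <= n /\ tr_idx pi n /\ In p (comp (ptr pi n)).

(* The proof rests on one invariant of annotated networks, [well_annotated]:
   every thread at location r is a closed term whose instructions are the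
   occurrences of r's own syntax tree, each sitting at its own address, except
   for unfolded copies of closed recursions which come from strictly shallower
   addresses ([addressed]).  It yields three facts about a transition t:
   a requested instruction belongs to its own thread; an instruction of t lives
   at a location of comp(t); and an instruction requested both before and after
   t, whose thread moves in t, is executed by t.
   SC => SWI: an instruction requested forever and enabled infinitely often
   makes its location move infinitely often in enabled transitions, so SC makes
   that location move, and the third fact says the instruction was executed.
   SWI => SC: a location that never moves has a constant thread state; finitely
   many instructions are requested in it, so one of them is enabled infinitely
   often (pigeonhole) and SWI forces it to execute, moving the location. *)

From Stdlib Require Import List Arith Bool Lia Classical.
Import ListNotations.

Definition proc_ind_nested (Pr : proc -> Prop)
  (H_end : Pr PEnd)
  (H_out : forall bs, Forall (fun b => Pr (snd b)) bs -> Pr (POut bs))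
  (H_in : forall bs, Forall (fun b => Pr (snd b)) bs -> Pr (PIn bs))
  (H_var : forall X, Pr (PVar X))
  (H_mu : forall X P, Pr P -> Pr (PMu X P)) : forall P, Pr P :=
  fix F P := match P with
  | PEnd => H_end
  | POut bs => H_out bs ((fix G bs : Forall (fun b => Pr (snd b)) bs :=
      match bs with [] => Forall_nil _ | b :: bs' => Forall_cons b (F (snd b)) (G bs') end) bs)
  | PIn bs => H_in bs ((fix G bs : Forall (fun b => Pr (snd b)) bs :=
      match bs with [] => Forall_nil _ | b :: bs' => Forall_cons b (F (snd b)) (G bs') end) bs)
  | PVar X => H_var X
  | PMu X P => H_mu X P (F P)
  end.

Definition aproc_ind_nested (Pr : aproc -> Prop)
  (H_end : Pr AEnd)
  (H_out : forall bs, Forall (fun b => Pr (snd b)) bs -> Pr (AOut bs))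
  (H_in : forall bs, Forall (fun b => Pr (snd b)) bs -> Pr (AIn bs))
  (H_var : forall X, Pr (AVar X))
  (H_mu : forall i X P, Pr P -> Pr (AMu i X P)) : forall P, Pr P :=
  fix F P := match P with
  | AEnd => H_end
  | AOut bs => H_out bs ((fix G bs : Forall (fun b => Pr (snd b)) bs :=
      match bs with [] => Forall_nil _ | b :: bs' => Forall_cons b (F (snd b)) (G bs') end) bs)
  | AIn bs => H_in bs ((fix G bs : Forall (fun b => Pr (snd b)) bs :=
      match bs with [] => Forall_nil _ | b :: bs' => Forall_cons b (F (snd b)) (G bs') end) bs)
  | AVar X => H_var X
  | AMu i X P => H_mu i X P (F P)
  end.

Fixpoint afree (X : var) (P : aproc) : bool :=
  match P with
  | AEnd => false
  | AOut bs | AIn bs => (fix go (bs : list (instr * loc * lab * aproc)) :=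
      match bs with [] => false | (_, _, _, Q) :: bs' => afree X Q || go bs' end) bs
  | AVar Y => Nat.eqb X Y
  | AMu _ Y Q => negb (Nat.eqb X Y) && afree X Q
  end.

Definition aclosed (P : aproc) : Prop := forall Y, afree Y P = false.

Lemma occurs_free_POut X bs :
  occurs_free X (POut bs) = existsb (fun b => occurs_free X (snd b)) bs.
Proof. induction bs as [|[[q l] R] bs IH]; simpl in *; [reflexivity | now rewrite IH]. Qed.

Lemma occurs_free_PIn X bs :
  occurs_free X (PIn bs) = existsb (fun b => occurs_free X (snd b)) bs.
Proof. induction bs as [|[[q l] R] bs IH]; simpl in *; [reflexivity | now rewrite IH]. Qed.

Lemma afree_AOut X bs : afree X (AOut bs) = existsb (fun b => afree X (snd b)) bs.
Proof. induction bs as [|[[[i q] l] R] bs IH]; simpl in *; [reflexivity | now rewrite IH]. Qed.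

Lemma afree_AIn X bs : afree X (AIn bs) = existsb (fun b => afree X (snd b)) bs.
Proof. induction bs as [|[[[i q] l] R] bs IH]; simpl in *; [reflexivity | now rewrite IH]. Qed.

Definition subst_branch (X : var) (Q : aproc) (b : instr * loc * lab * aproc) :=
  let '(i, q, l, R) := b in (i, q, l, asubst X Q R).

Lemma asubst_AOut X Q bs : asubst X Q (AOut bs) = AOut (map (subst_branch X Q) bs).
Proof.
  simpl; f_equal.
  induction bs as [|[[[i q] l] R] bs IH]; simpl; [reflexivity | now rewrite IH].
Qed.

Lemma asubst_AIn X Q bs : asubst X Q (AIn bs) = AIn (map (subst_branch X Q) bs).
Proof.
  simpl; f_equal.
  induction bs as [|[[[i q] l] R] bs IH]; simpl; [reflexivity | now rewrite IH].
Qed.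

Lemma nth_subst_branch X Q bs k i q l R :
  nth_error (map (subst_branch X Q) bs) k = Some (i, q, l, R) ->
  exists R0, nth_error bs k = Some (i, q, l, R0) /\ R = asubst X Q R0.
Proof.
  rewrite nth_error_map.
  destruct (nth_error bs k) as [[[[i0 q0] l0] R0]|]; simpl; intros H; inversion H; eauto.
Qed.

Lemma existsb_false_In {A} (f : A -> bool) l x :
  existsb f l = false -> In x l -> f x = false.
Proof.
  intros H Hx. destruct (f x) eqn:E; auto.
  rewrite <- H; symmetry; apply existsb_exists; eauto.
Qed.

Lemma asubst_fresh X Q P : afree X P = false -> asubst X Q P = P.
Proof.
  induction P as [| bs IH | bs IH | Z | i Z R IH] using aproc_ind_nested; intros H.
  - reflexivity.
  - rewrite asubst_AOut, afree_AOut in *. f_equal. rewrite <- map_id.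
    apply map_ext_in. intros [[[i q] l] R] Hin. rewrite Forall_forall in IH.
    specialize (IH _ Hin (existsb_false_In _ _ _ H Hin)). simpl in *. now rewrite IH.
  - rewrite asubst_AIn, afree_AIn in *. f_equal. rewrite <- map_id.
    apply map_ext_in. intros [[[i q] l] R] Hin. rewrite Forall_forall in IH.
    specialize (IH _ Hin (existsb_false_In _ _ _ H Hin)). simpl in *. now rewrite IH.
  - simpl in *. now rewrite H.
  - simpl in *. destruct (Nat.eqb X Z); [reflexivity|]. simpl in H. now rewrite IH.
Qed.

Lemma afree_asubst X Q P Y :
  aclosed Q -> afree Y (asubst X Q P) = true -> afree Y P = true /\ Y <> X.
Proof.
  intros HQ. induction P as [| bs IH | bs IH | Z | i Z R IH] using aproc_ind_nested; intros H.
  - discriminate.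
  - rewrite asubst_AOut, afree_AOut in H. apply existsb_exists in H as [b [Hb Hf]].
    apply in_map_iff in Hb as [[[[i q] l] R] [<- Hin]]. rewrite Forall_forall in IH.
    destruct (IH _ Hin Hf) as [HR HY]. split; auto.
    rewrite afree_AOut. apply existsb_exists. exists (i, q, l, R). auto.
  - rewrite asubst_AIn, afree_AIn in H. apply existsb_exists in H as [b [Hb Hf]].
    apply in_map_iff in Hb as [[[[i q] l] R] [<- Hin]]. rewrite Forall_forall in IH.
    destruct (IH _ Hin Hf) as [HR HY]. split; auto.
    rewrite afree_AIn. apply existsb_exists. exists (i, q, l, R). auto.
  - simpl in H. destruct (Nat.eqb_spec X Z).
    + now rewrite HQ in H.
    + simpl in H. apply Nat.eqb_eq in H. subst. simpl. now rewrite Nat.eqb_refl.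
  - simpl in H. simpl. destruct (Nat.eqb_spec X Z) as [<- | _];
      apply andb_true_iff in H as [HZ HR]; rewrite HZ.
    + split; [exact HR|]. intros ->. now rewrite Nat.eqb_refl in HZ.
    + now apply IH.
Qed.

Fixpoint ann_branches (p : loc) (a : list dir) (k : nat) (bs : list (loc * lab * proc)) :=
  match bs with
  | [] => []
  | (q, l, Q) :: bs' =>
      ((p, Dbranch k :: a), q, l, ann p (Dcont k :: a) Q) :: ann_branches p a (S k) bs'
  end.

Lemma ann_POut p a bs : ann p a (POut bs) = AOut (ann_branches p a 0 bs).
Proof.
  simpl; f_equal. generalize 0.
  induction bs as [|[[q l] Q] bs IH]; intros k; simpl; [reflexivity | now rewrite IH].
Qed.

Lemma ann_PIn p a bs : ann p a (PIn bs) = AIn (ann_branches p a 0 bs).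
Proof.
  simpl; f_equal. generalize 0.
  induction bs as [|[[q l] Q] bs IH]; intros k; simpl; [reflexivity | now rewrite IH].
Qed.

Lemma ann_branches_nth p a bs : forall k n i q l R,
  nth_error (ann_branches p a k bs) n = Some (i, q, l, R) ->
  i = (p, Dbranch (k + n) :: a) /\
  exists Q, R = ann p (Dcont (k + n) :: a) Q /\ In (q, l, Q) bs.
Proof.
  induction bs as [|[[q0 l0] Q0] bs IH]; intros k n i q l R H; [destruct n; discriminate|].
  destruct n as [|n]; simpl in H.
  - inversion H; subst. rewrite Nat.add_0_r. split; [reflexivity|]. exists Q0; simpl; auto.
  - destruct (IH _ _ _ _ _ _ H) as [Hi [Q [HR HQ]]].
    rewrite <- Nat.add_succ_comm. split; [exact Hi|]. exists Q; simpl; auto.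
Qed.

Lemma afree_ann p X P : forall a, afree X (ann p a P) = occurs_free X P.
Proof.
  induction P as [| bs IH | bs IH | Z | Z R IH] using proc_ind_nested; intros a;
    try reflexivity.
  - rewrite ann_POut, afree_AOut, occurs_free_POut. generalize 0.
    induction IH as [|[[q l] Q] bs HQ _ IHbs]; intros k; simpl in *; [reflexivity|].
    now rewrite HQ, IHbs.
  - rewrite ann_PIn, afree_AIn, occurs_free_PIn. generalize 0.
    induction IH as [|[[q l] Q] bs HQ _ IHbs]; intros k; simpl in *; [reflexivity|].
    now rewrite HQ, IHbs.
  - simpl. now rewrite IH.
Qed.

(* [addressed r c P]: P is (an unfolding of) the subterm at address c of the
   thread at location r. *)
Inductive addressed (r : loc) : list dir -> aproc -> Prop :=
| addr_end c : addressed r c AEnd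
| addr_var c X : addressed r c (AVar X)
| addr_out c bs :
    (forall k i q l R, nth_error bs k = Some (i, q, l, R) -> i = (r, Dbranch k :: c)) ->
    (forall k i q l R, nth_error bs k = Some (i, q, l, R) -> addressed r (Dcont k :: c) R) ->
    addressed r c (AOut bs)
| addr_in c bs :
    (forall k i q l R, nth_error bs k = Some (i, q, l, R) -> i = (r, Dbranch k :: c)) ->
    (forall k i q l R, nth_error bs k = Some (i, q, l, R) -> addressed r (Dcont k :: c) R) ->
    addressed r c (AIn bs)
| addr_mu c X R : addressed r (Dbody :: c) R -> addressed r c (AMu (r, c) X R)
| addr_mu_copy c a0 X R :
    length a0 < length c -> aclosed (AMu (r, a0) X R) ->
    addressed r (Dbody :: a0) R -> addressed r c (AMu (r, a0) X R).

Lemma addressed_ann p P : forall a, addressed p a (ann p a P).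
Proof.
  induction P as [| bs IH | bs IH | Z | Z R IH] using proc_ind_nested; intros a.
  - constructor.
  - rewrite ann_POut. rewrite Forall_forall in IH.
    constructor; intros k i q l R H;
      destruct (ann_branches_nth _ _ _ _ _ _ _ _ _ H) as [Hi [Q [-> HQ]]]; auto.
    apply (IH _ HQ).
  - rewrite ann_PIn. rewrite Forall_forall in IH.
    constructor; intros k i q l R H;
      destruct (ann_branches_nth _ _ _ _ _ _ _ _ _ H) as [Hi [Q [-> HQ]]]; auto.
    apply (IH _ HQ).
  - constructor.
  - constructor. apply IH.
Qed.

Lemma addressed_asubst r X Q c R :
  addressed r c R -> (forall c', length c <= length c' -> addressed r c' Q) ->
  addressed r c (asubst X Q R).
Proof.
  intros H. induction H; intros HQ.
  - constructor.
  - simpl. destruct (Nat.eqb X X0); [apply HQ; lia | constructor].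
  - rewrite asubst_AOut.
    constructor; intros k i q l R' Hn;
      destruct (nth_subst_branch _ _ _ _ _ _ _ _ Hn) as [R0 [HR0 ->]]; eauto.
    eapply H1; eauto. intros; apply HQ; simpl in *; lia.
  - rewrite asubst_AIn.
    constructor; intros k i q l R' Hn;
      destruct (nth_subst_branch _ _ _ _ _ _ _ _ Hn) as [R0 [HR0 ->]]; eauto.
    eapply H1; eauto. intros; apply HQ; simpl in *; lia.
  - simpl. destruct (Nat.eqb X X0); constructor; auto.
    apply IHaddressed. intros; apply HQ; simpl in *; lia.
  - rewrite asubst_fresh; [now constructor | apply H0].
Qed.

Lemma addressed_AOut_inv r c bs : addressed r c (AOut bs) ->
  (forall k i q l R, nth_error bs k = Some (i, q, l, R) -> i = (r, Dbranch k :: c)) /\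
  (forall k i q l R, nth_error bs k = Some (i, q, l, R) -> addressed r (Dcont k :: c) R).
Proof. intros H; inversion H; auto. Qed.

Lemma addressed_AIn_inv r c bs : addressed r c (AIn bs) ->
  (forall k i q l R, nth_error bs k = Some (i, q, l, R) -> i = (r, Dbranch k :: c)) /\
  (forall k i q l R, nth_error bs k = Some (i, q, l, R) -> addressed r (Dcont k :: c) R).
Proof. intros H; inversion H; auto. Qed.

Lemma addressed_front r c P I : addressed r c P -> In I (front (AProc P)) ->
  (exists k, I = (r, Dbranch k :: c)) \/ I = (r, c) \/
  exists a0, I = (r, a0) /\ length a0 < length c.
Proof.
  intros Hw Hf. destruct Hw; simpl in Hf; try contradiction.
  - apply in_map_iff in Hf as [[[[i q] l] R] [E Hin]]. simpl in E. subst.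
    apply In_nth_error in Hin as [k Hk]. left. eauto.
  - apply in_map_iff in Hf as [[[[i q] l] R] [E Hin]]. simpl in E. subst.
    apply In_nth_error in Hin as [k Hk]. left. eauto.
  - destruct Hf as [<-|[]]. auto.
  - destruct Hf as [<-|[]]. eauto.
Qed.

Definition ts_addressed (r : loc) (T : atstate) : Prop :=
  match T with
  | AProc P => aclosed P /\ exists c, addressed r c P
  | APend i _ _ P => fst i = r /\ aclosed P /\ exists c, addressed r c P
  end.

Definition well_annotated (N : anet) : Prop :=
  forall r T, N r = Some T -> ts_addressed r T.

Lemma well_annotated_annotate N0 : wf_network N0 -> well_annotated (annotate N0).
Proof.
  intros [_ Hwf] r T H. unfold annotate in H.
  destruct (N0 r) as [T0|] eqn:E; [|discriminate]. injection H as <-.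
  apply Hwf in E.
  destruct T0 as [P|q l P]; simpl in *; destruct E as [Hc _];
    repeat split; try (intro Y; rewrite afree_ann; apply Hc);
    eexists; apply addressed_ann.
Qed.

Lemma aclosed_branch bs k i q l R : nth_error bs k = Some (i, q, l, R) ->
  aclosed (AOut bs) \/ aclosed (AIn bs) -> aclosed R.
Proof.
  intros H Hc Y. apply not_true_is_false. intros HY.
  assert (Hx : existsb (fun b => afree Y (snd b)) bs = true).
  { apply existsb_exists. exists (i, q, l, R). eauto using nth_error_In. }
  destruct Hc as [Hc|Hc]; specialize (Hc Y);
    [rewrite afree_AOut in Hc | rewrite afree_AIn in Hc]; congruence.
Qed.

Lemma ts_addressed_unfold p i X P : ts_addressed p (AProc (AMu i X P)) ->
  ts_addressed p (AProc (asubst X (AMu i X P) P)).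
Proof.
  intros [Hc [c Hw]].
  assert (Ha : exists a0, i = (p, a0) /\ addressed p (Dbody :: a0) P)
    by (inversion Hw; eauto).
  destruct Ha as [a0 [-> Hw']]. split.
  - intros Y. apply not_true_is_false. intros HY.
    destruct (afree_asubst _ _ _ _ Hc HY) as [HPY HXY].
    specialize (Hc Y). simpl in Hc. rewrite HPY in Hc.
    destruct (Nat.eqb_spec Y X); [contradiction | discriminate].
  - exists (Dbody :: a0). apply addressed_asubst; auto.
    intros c' Hl. simpl in Hl. apply addr_mu_copy; auto; lia.
Qed.

Lemma well_annotated_step N t N' : well_annotated N -> step N t N' -> well_annotated N'.
Proof.
  intros HI Hs. destruct Hs; intros r T HT; unfold upd in HT.
  - destruct (Nat.eqb_spec r p); [|eauto]. injection HT as <-. subst r.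
    destruct (HI _ _ H) as [Hc [c Hw]].
    destruct (addressed_AOut_inv _ _ _ Hw) as [Hid Hcont].
    simpl. rewrite (Hid _ _ _ _ _ H0). repeat split; eauto using aclosed_branch.
  - destruct (Nat.eqb_spec r p); [|eauto]. injection HT as <-. subst r.
    exact (ts_addressed_unfold _ _ _ _ (HI _ _ H)).
  - destruct (Nat.eqb_spec r q).
    + injection HT as <-. subst r. destruct (HI _ _ H0) as [Hc [c Hw]].
      destruct (addressed_AIn_inv _ _ _ Hw) as [_ Hcont].
      split; eauto using aclosed_branch.
    + destruct (Nat.eqb_spec r p); [|eauto]. injection HT as <-. subst r.
      destruct (HI _ _ H) as [_ HQ]. exact HQ.
Qed.

Lemma front_own_location N r T I :
  well_annotated N -> N r = Some T -> In I (front T) -> fst I = r.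
Proof.
  intros HI HN Hf. specialize (HI _ _ HN).
  destruct T as [P|i q l P]; simpl in HI.
  - destruct HI as [_ [c Hw]].
    destruct (addressed_front _ _ _ _ Hw Hf) as [[k ->]|[->|[a0 [-> _]]]]; reflexivity.
  - destruct Hf as [<-|[]]. tauto.
Qed.

Lemma branch_in_front bs k i q l P :
  nth_error bs k = Some (i, q, l, P) ->
  In i (front (AProc (AOut bs))) /\ In i (front (AProc (AIn bs))).
Proof.
  intros H. simpl. split; apply in_map_iff; exists (i, q, l, P);
    split; eauto using nth_error_In.
Qed.

Lemma comp_executes_front N t N' p : step N t N' -> In p (comp t) ->
  exists T, N p = Some T /\ exists I, In I (front T) /\ In I (tinstr t).
Proof.
  intros Hs Hp. destruct Hs; simpl in Hp.
  - destruct Hp as [<-|[]]. exists (AProc (AOut bs)). split; [assumption|].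
    exists i. split; [apply (branch_in_front _ _ _ _ _ _ H0) | now left].
  - destruct Hp as [<-|[]]. eexists; split; [eassumption|]. exists i. simpl; auto.
  - destruct Hp as [<-|[<-|[]]].
    + eexists; split; [eassumption|]. exists i. simpl; auto.
    + exists (AProc (AIn cs)). split; [assumption|].
      exists j. split; [apply (branch_in_front _ _ _ _ _ _ H1) | simpl; auto].
Qed.

Lemma instr_location_moves N t N' I :
  well_annotated N -> step N t N' -> In I (tinstr t) -> In (fst I) (comp t).
Proof.
  intros HI Hs HIn. destruct Hs; simpl in HIn |- *.
  - destruct HIn as [<-|[]]. left. symmetry.
    eapply front_own_location; eauto. apply (branch_in_front _ _ _ _ _ _ H0).
  - destruct HIn as [<-|[]]. left. symmetry.
    eapply front_own_location; eauto. simpl; auto.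
  - destruct HIn as [<-|[<-|[]]].
    + left. symmetry. eapply front_own_location; eauto. simpl; auto.
    + right; left. symmetry. eapply front_own_location; eauto.
      apply (branch_in_front _ _ _ _ _ _ H1).
Qed.

Lemma step_frame N t N' p : step N t N' -> ~ In p (comp t) -> N' p = N p.
Proof.
  intros Hs Hp. destruct Hs; simpl in Hp; unfold upd.
  - destruct (Nat.eqb_spec p p0); [subst; tauto | reflexivity].
  - destruct (Nat.eqb_spec p p0); [subst; tauto | reflexivity].
  - destruct (Nat.eqb_spec p q); [subst; tauto|].
    destruct (Nat.eqb_spec p p0); [subst; tauto | reflexivity].
Qed.

(* After an input, the continuation requests none of the input's branches:
   its requested instructions are strictly deeper or strictly shallower. *)
Lemma input_front_fresh r c cs k j p l P I :
  addressed r c (AIn cs) -> nth_error cs k = Some (j, p, l, P) ->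
  In I (front (AProc (AIn cs))) -> ~ In I (front (AProc P)).
Proof.
  intros Hw Hk Hold Hnew.
  destruct (addressed_AIn_inv _ _ _ Hw) as [Hid Hcont].
  simpl in Hold. apply in_map_iff in Hold as [[[[i0 q0] l0] R0] [E Hin]]. simpl in E. subst I.
  apply In_nth_error in Hin as [k0 Hk0]. rewrite (Hid _ _ _ _ _ Hk0) in Hnew.
  destruct (addressed_front _ _ _ _ (Hcont _ _ _ _ _ Hk) Hnew)
    as [[k' E]|[E|[a0 [E Hl]]]].
  - injection E as _ E. apply (f_equal (@length _)) in E. simpl in E. lia.
  - discriminate.
  - injection E as <-. simpl in Hl. lia.
Qed.

Lemma requested_across_step_executed N t N' I :
  well_annotated N -> step N t N' -> In (fst I) (comp t) ->
  requested N I -> requested N' I -> In I (tinstr t).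
Proof.
  intros HI Hs Hc [r [T [HT Hf]]] [r' [T' [HT' Hf']]].
  pose proof (front_own_location _ _ _ _ HI HT Hf) as E.
  pose proof (front_own_location _ _ _ _ (well_annotated_step _ _ _ HI Hs) HT' Hf') as E'.
  destruct Hs; simpl in Hc |- *.
  - destruct Hc as [Hc|[]]. subst. unfold upd in HT'. rewrite Nat.eqb_refl in HT'.
    injection HT' as <-. exact Hf'.
  - destruct Hc as [Hc|[]]. subst. rewrite H in HT. injection HT as <-. exact Hf.
  - destruct (Nat.eqb_spec r p) as [->|Hrp].
    + rewrite H in HT. injection HT as <-. simpl in Hf. tauto.
    + destruct Hc as [Hc|[Hc|[]]]; [congruence|]. subst r r'.
      rewrite <- Hc, H0 in HT. injection HT as <-.
      unfold upd in HT'. rewrite Hc, Nat.eqb_refl in HT'. injection HT' as <-.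
      destruct (HI _ _ H0) as [_ [c Hw]].
      exfalso. exact (input_front_fresh _ _ _ _ _ _ _ _ _ Hw H1 Hf Hf').
Qed.

Lemma infinitely_often_pigeonhole {A : Type} (L : list A) (P : nat -> A -> Prop) :
  (forall k, exists n, k <= n /\ exists x, In x L /\ P n x) ->
  exists x, In x L /\ forall k, exists n, k <= n /\ P n x.
Proof.
  induction L as [|x L IH]; intros H.
  - destruct (H 0) as [n [_ [x [[] _]]]].
  - destruct (classic (forall k, exists n, k <= n /\ P n x)) as [Hx|Hx].
    + exists x. simpl; auto.
    + apply not_all_ex_not in Hx as [K HK].
      destruct IH as [y [Hy HP]].
      * intros k. destruct (H (max k K)) as [n [Hn [y [[<-|Hy] HPy]]]].
        -- exfalso. apply HK. exists n. split; [lia | exact HPy].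
        -- exists n. split; [lia|]. eauto.
      * exists y. simpl; auto.
Qed.

Lemma tr_idx_st_idx pi n : tr_idx pi n -> st_idx pi n /\ st_idx pi (S n).
Proof. unfold tr_idx, st_idx. destruct (plen pi); lia. Qed.

Lemma path_well_annotated N0 pi : wf_network N0 -> is_path pi ->
  pst pi 0 = annotate N0 -> forall n, st_idx pi n -> well_annotated (pst pi n).
Proof.
  intros Hwf [Hp _] H0 n. induction n as [|n IH]; intros Hs.
  - rewrite H0. now apply well_annotated_annotate.
  - assert (Ht : tr_idx pi n) by (unfold tr_idx, st_idx in *; destruct (plen pi); lia).
    apply (well_annotated_step (pst pi n) (ptr pi n)); auto.
    apply IH, tr_idx_st_idx, Ht.
Qed.

Section FairPaths.

Variable pi : path.
Hypothesis pi_path : is_path pi.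
Hypothesis pi_annotated : forall n, st_idx pi n -> well_annotated (pst pi n).

Lemma SC_fair_SWI_fair : SC_fair pi -> SWI_fair pi.
Proof.
  destruct pi_path as [Hstep _].
  intros HSC k Hk I Hreq Hen.
  destruct (HSC k Hk (fst I)) as [n [Hn [Htn Hc]]].
  - intros k' Hk' Hsk'. destruct (Hen k' Hk' Hsk') as [n [Hn [Hsn [t [N' [Hs HIn]]]]]].
    exists n, t, N'. repeat split; auto. eapply instr_location_moves; eauto.
  - exists n. repeat split; auto. destruct (tr_idx_st_idx _ _ Htn) as [Hsn HsSn].
    apply (requested_across_step_executed (pst pi n) (ptr pi n) (pst pi (S n)));
      auto; apply Hreq; auto; lia.
Qed.

(* A finite path is vacuously SC-fair: its final state is stuck, so no
   location can be able to move in every suffix. *)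
Lemma SC_fair_finite m : plen pi = Some m -> SC_fair pi.
Proof.
  destruct pi_path as [_ Hmax].
  intros Hlen k Hk p Hprem. exfalso.
  assert (Hkm : k <= m) by (unfold st_idx in Hk; rewrite Hlen in Hk; exact Hk).
  destruct (Hprem m Hkm) as [n [t [N' [Hn [Hsn [Hs _]]]]]];
    [unfold st_idx; rewrite Hlen; auto|].
  unfold st_idx in Hsn; rewrite Hlen in Hsn.
  replace n with m in Hs by lia. exact (Hmax m Hlen _ _ Hs).
Qed.

Lemma idle_location_constant k p : plen pi = None ->
  (forall n, k <= n -> ~ In p (comp (ptr pi n))) ->
  forall n, k <= n -> pst pi n p = pst pi k p.
Proof.
  destruct pi_path as [Hstep _].
  intros Hlen Hidle n Hn. induction Hn as [|n Hn IH]; [reflexivity|].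
  rewrite <- IH. apply (step_frame _ (ptr pi n)).
  - apply Hstep. unfold tr_idx. now rewrite Hlen.
  - apply Hidle, Hn.
Qed.

Lemma SWI_fair_SC_fair : SWI_fair pi -> SC_fair pi.
Proof.
  destruct pi_path as [Hstep _].
  intros HSWI. destruct (plen pi) as [m|] eqn:Hlen; [now apply (SC_fair_finite m)|].
  assert (Hst : forall n, st_idx pi n) by (intros; unfold st_idx; now rewrite Hlen).
  assert (Htr : forall n, tr_idx pi n) by (intros; unfold tr_idx; now rewrite Hlen).
  intros k Hk p Hprem. apply NNPP. intros Hidle.
  assert (Hconst : forall n, k <= n -> pst pi n p = pst pi k p).
  { apply idle_location_constant; auto.
    intros n Hn Hp. apply Hidle. exists n. auto. }
  (* p has a constant thread state T0 from k on *)
  destruct (Hprem k (le_n k) Hk) as [n0 [t0 [N0' [Hn0 [_ [Hs0 Hp0]]]]]].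
  destruct (comp_executes_front _ _ _ _ Hs0 Hp0) as [T0 [HT0 _]].
  rewrite Hconst in HT0 by exact Hn0.
  (* one instruction of T0 is enabled infinitely often *)
  destruct (infinitely_often_pigeonhole (front T0)
              (fun n I => k <= n /\ enabled (pst pi n) I)) as [I [HI HP]].
  { intros k'. destruct (Hprem (max k k') ltac:(lia) (Hst _))
      as [n [t [N' [Hn [_ [Hs Hp]]]]]].
    destruct (comp_executes_front _ _ _ _ Hs Hp) as [T [HT [I [HI1 HI2]]]].
    rewrite Hconst, HT0 in HT by lia. injection HT as <-.
    exists n. split; [lia|]. exists I. split; [exact HI1|]. split; [lia|]. exists t, N'. auto. }
  (* so SWI executes it, which moves p *)
  destruct (HSWI k Hk I) as [n [Hn [_ HIn]]].
  - intros n Hn _. exists p, T0. rewrite Hconst; auto.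
  - intros k' Hk' _. destruct (HP k') as [n [Hn [_ Hen]]]. eauto.
  - apply Hidle. exists n. repeat split; auto.
    pose proof (instr_location_moves _ _ _ _ (pi_annotated n (Hst n)) (Hstep n (Htr n)) HIn) as Hc.
    rewrite (front_own_location _ _ _ _ (pi_annotated k Hk) HT0 HI) in Hc. exact Hc.
Qed.

End FairPaths.

Theorem mainTheorem18 :
  forall (N0 : network), wf_network N0 ->
  forall pi : path, is_path pi -> pst pi 0 = annotate N0 ->
  (SWI_fair pi <-> SC_fair pi).
Proof.
  intros N0 Hwf pi Hpath H0.
  pose proof (path_well_annotated N0 pi Hwf Hpath H0) as Hann.
  split.
  - exact (SWI_fair_SC_fair pi Hpath Hann).
  - exact (SC_fair_SWI_fair pi Hpath Hann).
Qed.
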